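(* Let $w$ be a weakly cyclically reduced word on $\{\alpha_n^{\pm1},\dots,\alpha_1^{\pm1},\beta^{\pm1}\}$ in which some letter $\alpha_i^{\pm1}$ occurs (i.e. $w\notin\langle\beta\rangle$). For every finite subset $F$ of the vertex set $X$ of the pre-graph $G_0$, there exists an extension $G$ of $G_0$ such that the cycle $C(w,v_0)$ embeds in $G$ and its image contains no vertex of $F$.
   Context: A graph consists of a vertex set $V$, an edge set $E$, a fixed-point-free involution $e\mapsto\bar e$ on $E$, and maps $i,t:E\to V$ with $i(\bar e)=t(e)$. A labeling on $S^{\pm1}$ is a map $l:E\to S^{\pm1}$ with $l(\bar e)=l(e)^{-1}$. A labeled graph is well-labeled if $i(e)=i(e')$ and $l(e)=l(e')$ imply $e=e'$. A homomorphism of labeled graphs maps vertices to vertices and edges to edges preserving $i$, $t$ and labels; an embedding is an injective homomorphism. A word $w_m\cdots w_1$ is reduced if $w_{j+1}\neq w_j^{-1}$ for all $j$, and weakly cyclically reduced if moreover $w_m\neq w_1^{-1}$ (equality $w_m=w_1$ is allowed). For such $w$, the cycle $C(w,v_0)$ is the labeled graph with $m$ distinct vertices $v_0,\dots,v_{m-1}$ and directed edges $e_1,\dots,e_m$ (with their inverses), $e_j$ going from $v_{j-1}$ to $v_j$ (indices mod $m$, so $t(e_m)=v_0$) with label $w_j$. Let $X$ be an infinite countable set and $\beta$ a permutation of $X$ acting simply transitively. The pre-graph $G_0$ has vertex set $X$ and for each $x\in X$ one directed edge from $x$ to $\beta(x)$ labeled $\beta$ (with its inverse labeled $\beta^{-1}$).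 An extension of $G_0$ is a well-labeled graph labeled on $\{\alpha_n^{\pm1},\dots,\alpha_1^{\pm1},\beta^{\pm1}\}$ containing $G_0$ and with vertex set exactly $X$. *)

From Stdlib Require List.
From mathcomp Require Import all_boot.
Set Implicit Arguments. Unset Strict Implicit. Unset Printing Implicit Defensive.

(* Letters of {alpha_n^{+-1},...,alpha_1^{+-1}, beta^{+-1}}:
   (None, true) = beta, (None, false) = beta^-1,
   (Some i, true) = alpha_{i+1}, (Some i, false) = alpha_{i+1}^-1. *)
Definition letter (n : nat) : Type := (option 'I_n * bool)%type.
Definition linv (n : nat) (a : letter n) : letter n := (a.1, ~~ a.2).
Definition beta_letter (n : nat) : letter n := (None, true).
Definition is_alpha_letter (n : nat) (a : letter n) : bool := a.1 != None.

(* A word w = w_m ... w_1 is represented by the list [:: w_1; ...; w_m],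
   i.e. w`_j is the letter w_{j+1}. *)
Definition reduced (n : nat) (w : seq (letter n)) : Prop :=
  forall j, j.+1 < size w ->
    nth (beta_letter n) w j.+1 <> linv (nth (beta_letter n) w j).

Definition weakly_cyclically_reduced (n : nat) (w : seq (letter n)) : Prop :=
  reduced w /\
  (0 < size w -> last (beta_letter n) w <> linv (head (beta_letter n) w)).

Record lgraph (n : nat) (V : Type) := LGraph {
  edge : Type;
  ebar : edge -> edge;
  src : edge -> V;
  tgt : edge -> V;
  lab : edge -> letter n
}.
Arguments edge {n V} l.
Arguments ebar {n V} l _.
Arguments src {n V} l _.
Arguments tgt {n V} l _.
Arguments lab {n V} l _.

Definition is_graph (n : nat) (V : Type) (G : lgraph n V) : Prop :=
  (forall e, ebar G (ebar G e) = e) /\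
  (forall e, ebar G e <> e) /\
  (forall e, src G (ebar G e) = tgt G e) /\
  (forall e, lab G (ebar G e) = linv (lab G e)).

Definition well_labeled (n : nat) (V : Type) (G : lgraph n V) : Prop :=
  forall e e', src G e = src G e' -> lab G e = lab G e' -> e = e'.

Definition homomorphism (n : nat) (V W : Type) (G : lgraph n V) (H : lgraph n W)
  (f : V -> W) (g : edge G -> edge H) : Prop :=
  forall e, src H (g e) = f (src G e) /\ tgt H (g e) = f (tgt G e) /\
            lab H (g e) = lab G e.

Arguments homomorphism {n V W} G H f g.

Definition embedding (n : nat) (V W : Type) (G : lgraph n V) (H : lgraph n W)
  (f : V -> W) (g : edge G -> edge H) : Prop :=
  homomorphism G H f g /\ injective f /\ injective g.
Arguments embedding {n V W} G H f g.

(* The action of beta is simply transitive: the Z-action generated by the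
   permutation beta is transitive and free. *)
Definition simply_transitive (X : Type) (beta : X -> X) : Prop :=
  (forall x y, exists k : nat, iter k beta x = y \/ iter k beta y = x) /\
  (forall x (k : nat), iter k.+1 beta x <> x).

(* The pre-graph G_0: edge (x, true) goes from x to beta x with label beta,
   (x, false) is its inverse. *)
Definition pregraph (n : nat) (X : Type) (beta : X -> X) : lgraph n X :=
  @LGraph n X (X * bool)%type
    (fun e => (e.1, ~~ e.2))
    (fun e => if e.2 then e.1 else beta e.1)
    (fun e => if e.2 then beta e.1 else e.1)
    (fun e => if e.2 then beta_letter n else linv (beta_letter n)).

Definition extension (n : nat) (X : Type) (beta : X -> X) (G : lgraph n X) : Prop :=
  is_graph G /\ well_labeled G /\
  exists g : edge (pregraph n beta) -> edge G, embedding (pregraph n beta) G id g.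

(* The cycle C(w, v_0): vertices 'I_m (vertex k = v_k); edge (k, true) is
   e_{k+1}, from v_k to v_{k+1 mod m} with label w_{k+1};
   (k, false) is its inverse. *)
Definition cycle_graph (n : nat) (w : seq (letter n)) : lgraph n 'I_(size w) :=
  @LGraph n 'I_(size w) ('I_(size w) * bool)%type
    (fun e => (e.1, ~~ e.2))
    (fun e => if e.2 then e.1 else ordS e.1)
    (fun e => if e.2 then ordS e.1 else e.1)
    (fun e => if e.2 then nth (beta_letter n) w e.1
              else linv (nth (beta_letter n) w e.1)).

(* Number the vertices of C(w, v_0) starting right after a fixed alpha-edge [L] and send the
   t-th one to [beta^(h t) x0], where [h] moves by +1 / -1 / m = |w| across an edge labeled
   [beta] / [beta^-1] / [alpha_i^{+-1}]; the edge [L] itself imposes nothing. The exponents are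
   distinct: between two vertices either an alpha-step occurs, and it outweighs all the -1
   steps, or only beta-letters occur, and cyclic reducedness forces them to be all equal.
   The beta-edges of the cycle are then edges of G_0, adding the alpha-edges gives a
   well-labeled extension, and shifting all exponents beyond the finitely many that land in
   [F] avoids [F]. *)

From Stdlib Require List.
From mathcomp Require Import all_boot order ssralg ssrnum ssrint zify.
Set Implicit Arguments. Unset Strict Implicit. Unset Printing Implicit Defensive.
Import Order.TTheory GRing.Theory Num.Theory.

Lemma linvK n : involutive (@linv n).
Proof. by case=> a b; rewrite /linv /= negbK. Qed.

Lemma beta_letters_eq n (a b : letter n) :
  a.1 = None -> b.1 = None -> b <> linv a -> b = a.
Proof. by case: a b => [[?|] []] [[?|] []] //= _ _; rewrite /linv /=. Qed.

Lemma val_iter_ordS m (a : 'I_m) t : val (iter t (@ordS m) a) = (a + t) %% m.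
Proof.
elim: t => [|t IH]; first by rewrite addn0 modn_small.
by rewrite iterS /= IH -addn1 modnDml -addnA addn1.
Qed.

Lemma iter_ordS_inj m (a : 'I_m) t t' : t < m -> t' < m ->
  iter t (@ordS m) a = iter t' (@ordS m) a -> t = t'.
Proof.
move=> tm t'm /(congr1 val); rewrite !val_iter_ordS => /eqP.
by rewrite eqn_modDl !modn_small // => /eqP.
Qed.

Lemma iter_ordS_period m (a : 'I_m) : iter m (@ordS m) a = a.
Proof. by apply: val_inj; rewrite val_iter_ordS modnDr modn_small. Qed.

Section PartialSums.
Local Open Scope ring_scope.
Variable s : nat -> int.

Lemma sum_ge_neg_length j k : (forall i, (j <= i < k)%N -> -1 <= s i) ->
  - (k - j)%:R <= \sum_(j <= i < k) s i.
Proof. by move=> s_ge; rewrite -mulNrn -sumr_const_nat; exact: ler_sum_nat. Qed.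

Lemma sum_ge_term_sub_length j i0 k : (j <= i0 < k)%N ->
  (forall i, (j <= i < k)%N -> -1 <= s i) ->
  s i0 - (k - j).-1%:R <= \sum_(j <= i < k) s i.
Proof.
move=> /andP[ji0 i0k] s_ge.
rewrite (big_cat_nat ji0 (ltnW i0k)) [X in _ <= _ + X]big_ltn //=.
have lo1 : - (i0 - j)%:R <= \sum_(j <= i < i0) s i.
  by apply: sum_ge_neg_length => i /andP[ji ii0]; apply: s_ge; lia.
have lo2 : - (k - i0.+1)%:R <= \sum_(i0.+1 <= i < k) s i.
  by apply: sum_ge_neg_length => i /andP[ji ik]; apply: s_ge; lia.
apply: le_trans (lerD lo1 (lerD (lexx _) lo2)); lia.
Qed.

Lemma run_constant j k : (forall i, (j <= i)%N -> (i.+1 < k)%N -> s i.+1 = s i) ->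
  forall i, (j <= i < k)%N -> s i = s j.
Proof.
move=> s_next; elim=> [|i IH] /andP[ji ik]; first by move: ji; rewrite leqn0 => /eqP->.
have [ji'|-> //] : (j <= i)%N \/ j = i.+1 by lia.
by rewrite s_next // IH // ji' ltnW.
Qed.

Lemma sum_run j k : (forall i, (j <= i < k)%N -> s i = s j) ->
  \sum_(j <= i < k) s i = s j *+ (k - j).
Proof. by move=> s_const; rewrite -sumr_const_nat; exact: eq_big_nat. Qed.

Variable N : nat.
Hypothesis s_unit_or_big : forall i, (i < N)%N -> `|s i| = 1 \/ N%:R <= s i.
Hypothesis unit_steps_agree : forall i, (i.+1 < N)%N ->
  `|s i| = 1 -> `|s i.+1| = 1 -> s i.+1 = s i.

Lemma sum_unit_or_big_neq0 j k : (j < k <= N)%N -> \sum_(j <= i < k) s i != 0.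
Proof.
move=> /andP[jk kN].
have s_ge : forall i, (j <= i < k)%N -> -1 <= s i.
  by move=> i ijk; case: (s_unit_or_big (i := i)); lia.
case: (boolP (has (fun i => N%:R <= s i) (index_iota j k))) => [/hasP[i0]|/hasPn small].
  rewrite mem_index_iota => i0jk s_big.
  have := sum_ge_term_sub_length i0jk s_ge; lia.
have unit_s : forall i, (j <= i < k)%N -> `|s i| = 1.
  move=> i ijk; have := small i; rewrite mem_index_iota ijk => /(_ isT).
  by case: (s_unit_or_big (i := i)) => // [|->]; lia.
rewrite sum_run; last first.
  apply: run_constant => i ji ik; apply: unit_steps_agree; [lia | apply: unit_s; lia ..].
have := unit_s j; lia.
Qed.

Lemma partial_sums_inj j k : (j <= N)%N -> (k <= N)%N ->
  \sum_(0 <= i < j) s i = \sum_(0 <= i < k) s i -> j = k.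
Proof.
wlog jk : j k / (j <= k)%N.
  by move=> IH jN kN Es; case: (leqP j k) => [|/ltnW] /IH; [apply | move=> /(_ kN jN (esym Es))].
move=> _ kN; rewrite (big_cat_nat (leq0n j) jk) /= -[LHS]addr0 => /addrI /esym Es.
apply/eqP; rewrite eqn_leq jk leqNgt; apply/negP => lt_jk.
by move: (sum_unit_or_big_neq0 (j := j) (k := k)); rewrite Es lt_jk kN => /(_ isT).
Qed.

End PartialSums.

Section CycleWord.
Variables (n : nat) (w : seq (letter n)).
Hypothesis w_wcr : weakly_cyclically_reduced w.
Local Notation m := (size w).
Local Notation "w_[ k ]" := (nth (beta_letter n) w k).

Lemma wcr_next_neq_inv (k : 'I_m) : w_[ordS k] <> linv w_[k].
Proof.
case: w_wcr => w_red w_ends; have k_lt := ltn_ord k.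
have [k_last|k_mid] := eqVneq k.+1 m; last first.
  have k_next : k.+1 < m by rewrite ltn_neqAle k_mid.
  by rewrite /= modn_small //; apply: w_red.
rewrite /= k_last modnn => w0k; apply: (w_ends (leq_ltn_trans (leq0n _) k_lt)).
by rewrite -nth_last -nth0 w0k linvK; have -> : m.-1 = k by lia.
Qed.

Lemma cycle_graph_well_labeled : well_labeled (cycle_graph w).
Proof.
move=> [k []] [k' []] /= Es El.
- by rewrite Es.
- by exfalso; subst k; apply: (wcr_next_neq_inv El).
- by exfalso; subst k'; apply: (wcr_next_neq_inv (esym El)).
- by rewrite (ordS_inj Es).
Qed.

End CycleWord.

Definition letter_step n (M : int) (a : letter n) : int :=
  if a.1 is Some _ then M else if a.2 then 1%R else (-1)%R.

Lemma letter_step_unit_beta n (M : int) (a : letter n) :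
  (1 < M)%R -> `|letter_step M a|%R = 1%R -> a.1 = None.
Proof. by rewrite /letter_step; case: a => [[?|] b] //= M_gt1 M_unit; exfalso; lia. Qed.

Lemma letter_step_ge n (M : int) (a : letter n) : (0 <= M)%R -> (-1 <= letter_step M a)%R.
Proof. by rewrite /letter_step; case: a => [[?|] []] /=; lia. Qed.

Section CyclePlacement.
Local Open Scope ring_scope.
Variables (n : nat) (w : seq (letter n)).
Hypothesis w_wcr : weakly_cyclically_reduced w.
Local Notation m := (size w).
Local Notation "w_[ k ]" := (nth (beta_letter n) w k).
Variable L : 'I_m.
Hypothesis L_alpha : is_alpha_letter w_[L].

Local Notation step k := (letter_step m%:R w_[k]).

Definition arc_vertex t : 'I_m := iter t (@ordS m) (ordS L).

Definition arc_height t : int := \sum_(0 <= i < t) step (arc_vertex i).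

Lemma arc_vertexS t : arc_vertex t.+1 = ordS (arc_vertex t).
Proof. by []. Qed.

Lemma arc_vertex_last : arc_vertex m.-1 = L.
Proof.
have m_gt0 : (0 < m)%N := leq_ltn_trans (leq0n _) (ltn_ord L).
by apply: ordS_inj; rewrite -arc_vertexS prednK //; apply: iter_ordS_period.
Qed.

Lemma arc_height_inj t t' : (t < m)%N -> (t' < m)%N ->
  arc_height t = arc_height t' -> t = t'.
Proof.
move=> tm t'm; apply: (@partial_sums_inj _ m.-1); try lia.
  by move=> i _; rewrite /letter_step; case: (w_[_]) => [[?|] []] /=; lia.
move=> i i_lt unit_i unit_i1; have M_gt1 : 1 < m%:R :> int by lia.
rewrite arc_vertexS; congr letter_step; apply: beta_letters_eq.
- exact: letter_step_unit_beta unit_i.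
- by move: unit_i1; rewrite arc_vertexS => /letter_step_unit_beta; apply.
- exact: wcr_next_neq_inv.
Qed.

Lemma arc_heightS t : arc_height t.+1 = arc_height t + step (arc_vertex t).
Proof. exact: big_nat_recr. Qed.

Lemma arc_height_ge t : - t%:R <= arc_height t.
Proof.
by rewrite -[t in - t%:R]subn0; apply: sum_ge_neg_length => i _; apply: letter_step_ge.
Qed.

Lemma arc_vertex_inj : injective (fun t : 'I_m => arc_vertex t).
Proof. by move=> t t' /iter_ordS_inj eq_tt'; apply/val_inj/eq_tt'. Qed.

Definition arc_index : 'I_m -> 'I_m := invF arc_vertex_inj.

Lemma arc_indexK k : arc_vertex (arc_index k) = k.
Proof. exact: (f_invF arc_vertex_inj). Qed.

Lemma arc_index_inj : injective arc_index.
Proof. by move=> k k' eq_index; rewrite -(arc_indexK k) eq_index arc_indexK. Qed.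

Lemma arc_index_next k : k != L -> arc_index (ordS k) = (arc_index k).+1 :> nat.
Proof.
move=> k_neq_L; set t := arc_index k.
have t_next : (t.+1 < m)%N.
  rewrite ltn_neqAle ltn_ord andbT; apply: contra k_neq_L => /eqP t_last.
  by rewrite -(arc_indexK k) -/t -arc_vertex_last; have -> : m.-1 = t by lia.
apply: (@iter_ordS_inj m (ordS L)); rewrite ?ltn_ord //.
change (arc_vertex (arc_index (ordS k)) = arc_vertex t.+1).
by rewrite arc_indexK arc_vertexS arc_indexK.
Qed.

Variable B : nat.

(* [arc_height t >= -t > -m], so the argument of [absz] is positive and exceeds [B]. *)
Definition cycle_level (k : 'I_m) : nat := absz ((B + m)%N%:Z + arc_height (arc_index k)).

Lemma cycle_level_gt k : (B < cycle_level k)%N.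
Proof.
by have := arc_height_ge (arc_index k); have := ltn_ord (arc_index k); rewrite /cycle_level; lia.
Qed.

Lemma cycle_level_inj : injective cycle_level.
Proof.
move=> k k' eq_level; apply/arc_index_inj/ord_inj/arc_height_inj; rewrite ?ltn_ord //.
have := arc_height_ge (arc_index k); have := arc_height_ge (arc_index k').
have := ltn_ord (arc_index k); have := ltn_ord (arc_index k'); move: eq_level.
by rewrite /cycle_level; lia.
Qed.

Lemma cycle_level_next k : k != L ->
  (cycle_level (ordS k))%:Z = (cycle_level k)%:Z + step k.
Proof.
move=> k_neq_L; rewrite /cycle_level arc_index_next // arc_heightS arc_indexK.
have := arc_height_ge (arc_index k); have := ltn_ord (arc_index k).
have : -1 <= step k by apply: letter_step_ge.
lia.
Qed.

Lemma beta_position_neq (k : 'I_m) : w_[k].1 = None -> k != L.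
Proof. by move=> beta_k; apply: contraTneq L_alpha => <-; rewrite /is_alpha_letter beta_k. Qed.

Lemma cycle_level_beta (k : 'I_m) :
  w_[k] = beta_letter n -> cycle_level (ordS k) = (cycle_level k).+1.
Proof.
move=> beta_k; have := cycle_level_next (beta_position_neq (congr1 fst beta_k)).
by rewrite /letter_step beta_k /=; lia.
Qed.

Lemma cycle_level_beta_inv (k : 'I_m) :
  w_[k] = linv (beta_letter n) -> cycle_level k = (cycle_level (ordS k)).+1.
Proof.
move=> beta_k; have := cycle_level_next (beta_position_neq (congr1 fst beta_k)).
by rewrite /letter_step beta_k /=; lia.
Qed.

End CyclePlacement.

Section FreeOrbit.
Variables (X : Type) (f : X -> X) (x0 : X).
Hypothesis f_simply_transitive : simply_transitive f.

Lemma iter_free_inj k k' : iter k f x0 = iter k' f x0 -> k = k'.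
Proof.
suff lt_neq j j' : j < j' -> iter j f x0 <> iter j' f x0.
  by move=> eq_kk'; case: (ltngtP k k') => // /lt_neq; [|move/(_ (esym eq_kk'))].
move=> lt_jj' eq_jj'; apply: (f_simply_transitive.2 (iter j f x0) (j' - j).-1).
by rewrite prednK ?subn_gt0 // -iterD subnK ?eq_jj' // ltnW.
Qed.

Lemma orbit_eventually_avoids (F : list X) :
  exists B, forall k, B < k -> ~ List.In (iter k f x0) F.
Proof.
elim: F => [|y F [B avoid_F]]; first by exists 0 => ? _ [].
have [k0 [y_at_k0|x0_at_k0]] := f_simply_transitive.1 x0 y.
  exists (maxn B k0) => k; rewrite gtn_max => /andP[B_lt k0_lt] [y_at_k|]; last exact: avoid_F.
  by move: k0_lt; rewrite (iter_free_inj (etrans y_at_k0 y_at_k)) ltnn.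
exists B => k B_lt [y_at_k|]; last exact: avoid_F.
have := @iter_free_inj (k0 + k) 0; rewrite /= iterD -y_at_k x0_at_k0 => /(_ erefl).
by move/eqP; rewrite addn_eq0 => /andP[_ /eqP k_eq0]; move: B_lt; rewrite k_eq0.
Qed.

End FreeOrbit.

Lemma embedding_of_vertex_inj n V W (G : lgraph n V) (H : lgraph n W) f g :
  well_labeled G -> homomorphism G H f g -> injective f -> embedding G H f g.
Proof.
move=> G_wl g_hom f_inj; split=> //; split=> // e e' eq_g; apply: G_wl.
- by apply: f_inj; rewrite -(g_hom e).1 -(g_hom e').1 eq_g.
- by rewrite -(g_hom e).2.2 -(g_hom e').2.2 eq_g.
Qed.

Section CycleExtension.
Variables (n : nat) (X : Type) (beta : X -> X) (w : seq (letter n)).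
Variable vert : 'I_(size w) -> X.
Local Notation m := (size w).
Local Notation "w_[ k ]" := (nth (beta_letter n) w k).

Definition alpha_position := {k : 'I_m | is_alpha_letter w_[k]}.

(* The [beta]-letters of [w] are carried by edges of [G_0]; each [alpha]-letter gets a new
   edge pair. *)
Definition cycle_extension : lgraph n X :=
  @LGraph n X ((X * bool) + (alpha_position * bool))%type
    (fun e => match e with inl p => inl (p.1, ~~ p.2) | inr p => inr (p.1, ~~ p.2) end)
    (fun e => match e with
              | inl p => if p.2 then p.1 else beta p.1
              | inr p => if p.2 then vert (val p.1) else vert (ordS (val p.1)) end)
    (fun e => match e with
              | inl p => if p.2 then beta p.1 else p.1
              | inr p => if p.2 then vert (ordS (val p.1)) else vert (val p.1) end)
    (fun e => match e with
              | inl p => if p.2 then beta_letter n else linv (beta_letter n)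
              | inr p => if p.2 then w_[val p.1] else linv w_[val p.1] end).

Definition cycle_edge (e : 'I_m * bool) : edge cycle_extension :=
  match insub e.1 with
  | Some k => inr (k, e.2)
  | None => if w_[e.1].2 then inl (vert e.1, e.2) else inl (vert (ordS e.1), ~~ e.2)
  end.

Lemma cycle_extension_is_graph : is_graph cycle_extension.
Proof.
split; [|split; [|split]].
- by case=> [[x b]|[s b]] /=; rewrite negbK.
- by case=> [[x b]|[s b]] /=; case: b.
- by case=> [[x b]|[s b]] /=; case: b.
- by case=> [[x b]|[s b]] /=; case: b => //=; rewrite linvK.
Qed.

Lemma pregraph_embedding : embedding (pregraph n beta) cycle_extension id inl.
Proof. by split=> //; split=> // e e' []. Qed.

Hypothesis w_wcr : weakly_cyclically_reduced w.
Hypothesis beta_inj : injective beta.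
Hypothesis vert_inj : injective vert.

Lemma cycle_extension_well_labeled : well_labeled cycle_extension.
Proof.
case=> [[x b]|[s b]] [[x' b'] | [s' b']] /=.
- by case: b; case: b' => //= eq_src _; rewrite ?eq_src ?(beta_inj eq_src).
- move=> _ /(congr1 fst); move: (valP s'); rewrite /is_alpha_letter.
  by case: b; case: b' => /= alpha_s' beta_s'; rewrite -beta_s' in alpha_s'.
- move=> _ /(congr1 fst); move: (valP s); rewrite /is_alpha_letter.
  by case: b; case: b' => /= alpha_s beta_s; rewrite beta_s in alpha_s.
- case: b; case: b' => /= /vert_inj eq_src eq_lab.
  + by rewrite (val_inj eq_src).
  + by exfalso; apply: (wcr_next_neq_inv w_wcr (k := val s')); rewrite -eq_src.
  + by exfalso; apply: (wcr_next_neq_inv w_wcr (k := val s)); rewrite eq_src -eq_lab.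
  + by rewrite (val_inj (ordS_inj eq_src)).
Qed.

Hypothesis vert_beta :
  forall k : 'I_m, w_[k] = beta_letter n -> vert (ordS k) = beta (vert k).
Hypothesis vert_beta_inv :
  forall k : 'I_m, w_[k] = linv (beta_letter n) -> vert k = beta (vert (ordS k)).

Lemma cycle_edge_hom : homomorphism (cycle_graph w) cycle_extension vert cycle_edge.
Proof.
move=> [k b]; rewrite /cycle_edge /=; case: insubP => [s _ val_s | not_alpha].
  by case: b => /=; rewrite val_s.
case E: w_[k] not_alpha => [[o|] []] //= _; case: b => /=;
  by rewrite ?(vert_beta E) ?(vert_beta_inv E).
Qed.

End CycleExtension.

Theorem lemma9 (n : nat) (X : Type) (beta : X -> X)
  (Hbij : bijective beta) (Hst : simply_transitive beta)
  (Hcount : exists f : X -> nat, injective f)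
  (Hinf : exists g : nat -> X, injective g)
  (w : seq (letter n)) (Hw : weakly_cyclically_reduced w)
  (Halpha : has (@is_alpha_letter n) w)
  (F : list X) :
  exists G : lgraph n X, extension beta G /\
    exists (f : 'I_(size w) -> X) (g : edge (cycle_graph w) -> edge G),
      embedding (cycle_graph w) G f g /\ (forall k, ~ List.In (f k) F).
Proof.
have [g _] := Hinf; set x0 := g 0.
have [B avoid_F] := orbit_eventually_avoids x0 Hst F.
set L : 'I_(size w) := Ordinal (etrans (esym (has_find _ _)) Halpha).
have L_alpha : is_alpha_letter (nth (beta_letter n) w L) := nth_find _ Halpha.
set vert := fun k => iter (cycle_level L B k) beta x0.
have vert_inj : injective vert.
  by move=> k k'; rewrite /vert => /(iter_free_inj Hst); apply: cycle_level_inj.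
exists (cycle_extension beta vert); split.
  split; [exact: cycle_extension_is_graph | split].
    exact: cycle_extension_well_labeled Hw (bij_inj Hbij) vert_inj.
  by exists inl; apply: pregraph_embedding.
exists vert, (cycle_edge beta vert); split.
  apply: embedding_of_vertex_inj (cycle_graph_well_labeled Hw) _ vert_inj.
  apply: cycle_edge_hom => k beta_k; rewrite /vert.
    by rewrite (cycle_level_beta L_alpha).
  by rewrite (cycle_level_beta_inv L_alpha).
by move=> k; apply: avoid_F; apply: cycle_level_gt.
Qed.
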